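(* Let $\lambda>0$ and $f_1,f_2\in\Omega_\lambda$. If $\lambda\le1$, then the Hadamard product $f_1*f_2\in\Omega_\lambda$.
   Context: $\Omega_\lambda$ denotes the set of functions $f$ analytic in $\mathbb{D}=\{z:|z|<1\}$ with $f(0)=0$, $f'(0)=1$, such that $zf'(z)-f(z)=\lambda z^2\phi(z)$ for some analytic $\phi$ on $\mathbb{D}$ with $|\phi(z)|\le1$. The Hadamard product of $\sum a_kz^k$ and $\sum b_kz^k$ is $\sum a_kb_kz^k$. *)

From Stdlib Require Import Reals.
From Coquelicot Require Import Coquelicot.
Open Scope R_scope.

Definition in_disk (z : C) : Prop := Cmod z < 1.

Definition pseries_rep (f : C -> C) (a : nat -> C) : Prop :=
  forall z, in_disk z -> is_pseries a z (f z).

(* f is analytic in D (on a disk: representable by its Taylor series at 0) *)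
Definition analytic_disk (f : C -> C) : Prop := exists a, pseries_rep f a.

Definition Omega (lam : R) (f : C -> C) : Prop :=
  analytic_disk f /\ f (RtoC 0) = RtoC 0 /\ is_derive f (RtoC 0) (RtoC 1) /\
  exists phi : C -> C,
    analytic_disk phi /\
    (forall z, in_disk z -> Cmod (phi z) <= 1) /\
    (forall z, in_disk z -> exists d : C,
        is_derive f z d /\
        Cminus (Cmult z d) (f z) = Cmult (Cmult (RtoC lam) (Cmult z z)) (phi z)).

Definition hadamard_rep (h : C -> C) (a1 a2 : nat -> C) : Prop :=
  pseries_rep h (fun k => Cmult (a1 k) (a2 k)).

(* Write f(z) = sum_k a_k z^k.  If f is in Omega_lambda, then a_0 = 0, a_1 = 1 and
   (z f'(z) - f(z)) / z^2 = sum_n (n+1) a_(n+2) z^n = lambda phi(z) with |phi| <= 1, so Parseval's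
   inequality on the circle |z| = r gives sum_n (n+1)^2 |a_(n+2)|^2 r^(2n) <= lambda^2.  For the
   Hadamard product of f_1 = sum a_k z^k and f_2 = sum b_k z^k, the modulus of (n+1) a_(n+2) b_(n+2)
   is at most the product of the two corresponding moduli, so with r^2 >= |z| and 2xy <= x^2 + y^2,
   sum_n (n+1) |a_(n+2) b_(n+2)| |z|^n <= lambda^2 <= lambda.  Hence (z h' - h) / (lambda z^2) is a
   power series of modulus at most 1 on the disk. *)

From Stdlib Require Import Reals Lra Lia ClassicalEpsilon.
From Coquelicot Require Import Coquelicot.
Open Scope R_scope.

Local Notation is_seriesC := (@is_series C_AbsRing C_NormedModule).

(** * Finite sums *)

Fixpoint csum (f : nat -> C) (n : nat) : C :=
  match n with O => RtoC 0 | S m => (csum f m + f m)%C end.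

Fixpoint rsum (f : nat -> R) (n : nat) : R :=
  match n with O => 0 | S m => rsum f m + f m end.

Section FiniteSums.

Implicit Types (f g : nat -> C) (u v : nat -> R).

Lemma csum_ext f g n : (forall k, (k < n)%nat -> f k = g k) -> csum f n = csum g n.
Proof. induction n as [|n IH]; intros H; simpl; auto. rewrite IH, H; auto. Qed.

Lemma csum_add f g n : csum (fun k => f k + g k)%C n = (csum f n + csum g n)%C.
Proof. induction n as [|n IH]; simpl; [ring|]. rewrite IH. ring. Qed.

Lemma csum_mull c f n : csum (fun k => c * f k)%C n = (c * csum f n)%C.
Proof. induction n as [|n IH]; simpl; [ring|]. rewrite IH. ring. Qed.

Lemma csum_mulr c f n : csum (fun k => f k * c)%C n = (csum f n * c)%C.
Proof. induction n as [|n IH]; simpl; [ring|]. rewrite IH. ring. Qed.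

Lemma csum_mul f g n m :
  (csum f n * csum g m)%C = csum (fun k => csum (fun l => f k * g l) m)%C n.
Proof.
  rewrite <- csum_mulr. apply csum_ext. intros k _. now rewrite <- csum_mull.
Qed.

Lemma Cconj_csum f n : Cconj (csum f n) = csum (fun k => Cconj (f k)) n.
Proof.
  induction n as [|n IH]; simpl.
  - apply injective_projections; simpl; ring.
  - now rewrite Cplus_conj, IH.
Qed.

Lemma csum_exchange (F : nat -> nat -> C) n m :
  csum (fun j => csum (fun k => F j k) n) m = csum (fun k => csum (fun j => F j k) m) n.
Proof.
  induction m as [|m IH]; simpl.
  - induction n as [|n IH]; simpl; [easy|]. rewrite <- IH. ring.
  - now rewrite IH, <- csum_add.
Qed.

Lemma csum_delta (x : C) k n : (k < n)%nat ->
  csum (fun l => if Nat.eqb l k then x else RtoC 0) n = x.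
Proof.
  induction n as [|n IH]; intros Hk; [lia|]. simpl.
  destruct (Nat.eqb_spec n k) as [->|Hne].
  - assert (Hzero : csum (fun _ => RtoC 0) k = RtoC 0).
    { clear. induction k as [|k IH]; simpl; [easy|]. rewrite IH. ring. }
    rewrite (csum_ext _ (fun _ => RtoC 0)), Hzero; [ring|].
    intros l Hl. destruct (Nat.eqb_spec l k); [lia|easy].
  - rewrite IH by lia. ring.
Qed.

Lemma csum_RtoC u n : csum (fun k => RtoC (u k)) n = RtoC (rsum u n).
Proof. induction n as [|n IH]; simpl; auto. now rewrite IH, RtoC_plus. Qed.

Lemma Cmod_csum_le f n : Cmod (csum f n) <= rsum (fun k => Cmod (f k)) n.
Proof.
  induction n as [|n IH]; simpl; [rewrite Cmod_0; lra|].
  eapply Rle_trans; [apply Cmod_triangle|lra].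
Qed.

Lemma csum_split f m p : csum f (m + p) = (csum f m + csum (fun k => f (m + k)%nat) p)%C.
Proof.
  induction p as [|p IH]; simpl; [rewrite Nat.add_0_r; ring|].
  rewrite Nat.add_succ_r. simpl. rewrite IH. ring.
Qed.

Lemma csum_geom q n : ((q - 1) * csum (Cpow q) n)%C = (q ^ n - 1)%C.
Proof.
  induction n as [|n IH]; simpl; [ring|]. rewrite Cmult_plus_distr_l, IH. ring.
Qed.

Lemma rsum_ext u v n : (forall k, (k < n)%nat -> u k = v k) -> rsum u n = rsum v n.
Proof. induction n as [|n IH]; intros H; simpl; auto. rewrite IH, H; auto. Qed.

Lemma rsum_le u v n : (forall k, (k < n)%nat -> u k <= v k) -> rsum u n <= rsum v n.
Proof.
  induction n as [|n IH]; intros H; simpl; [lra|].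
  pose proof (H n (Nat.lt_succ_diag_r n)). enough (rsum u n <= rsum v n) by lra.
  apply IH. intros k Hk. apply H. lia.
Qed.

Lemma rsum_ge0 u n : (forall k, 0 <= u k) -> 0 <= rsum u n.
Proof. intros H. induction n as [|n IH]; simpl; [lra|]. pose proof (H n). lra. Qed.

Lemma rsum_le_mono u n m : (forall k, 0 <= u k) -> (n <= m)%nat -> rsum u n <= rsum u m.
Proof. intros H Hnm. induction Hnm as [|m _ IH]; simpl; [lra|]. pose proof (H m). lra. Qed.

Lemma rsum_term_le u k n : (forall j, 0 <= u j) -> (k < n)%nat -> u k <= rsum u n.
Proof.
  intros H Hk. pose proof (rsum_le_mono u (S k) n H Hk). simpl in *.
  pose proof (rsum_ge0 u k H). lra.
Qed.

Lemma rsum_mull c u n : rsum (fun k => c * u k) n = c * rsum u n.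
Proof. induction n as [|n IH]; simpl; [ring|]. rewrite IH. ring. Qed.

Lemma rsum_add u v n : rsum (fun k => u k + v k) n = rsum u n + rsum v n.
Proof. induction n as [|n IH]; simpl; [ring|]. rewrite IH. ring. Qed.

Lemma rsum_const c n : rsum (fun _ => c) n = INR n * c.
Proof. induction n as [|n IH]; simpl rsum; [simpl; ring|]. rewrite IH, S_INR. ring. Qed.

Lemma rsum_split u m p : rsum u (m + p) = rsum u m + rsum (fun k => u (m + k)%nat) p.
Proof.
  induction p as [|p IH]; simpl; [rewrite Nat.add_0_r; ring|].
  rewrite Nat.add_succ_r. simpl. rewrite IH. ring.
Qed.

Lemma sum_n_csum f n : sum_n f n = csum f (S n).
Proof.
  induction n as [|n IH]; [rewrite sum_O; simpl; now rewrite Cplus_0_l|].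
  now rewrite sum_Sn, IH.
Qed.

Lemma sum_n_rsum u n : sum_n u n = rsum u (S n).
Proof. induction n as [|n IH]; [rewrite sum_O; simpl; ring|]. now rewrite sum_Sn, IH. Qed.

End FiniteSums.

(** * Roots of unity *)

Lemma RtoC_injective (x y : R) : RtoC x = RtoC y -> x = y.
Proof. intros H. now apply (f_equal fst) in H. Qed.

Definition cis (t : R) : C := (cos t, sin t).

Lemma cis_add s t : (cis s * cis t)%C = cis (s + t).
Proof. unfold cis, Cmult; simpl. rewrite cos_plus, sin_plus. f_equal; ring. Qed.

Lemma cis_pow t k : (cis t ^ k)%C = cis (INR k * t).
Proof.
  induction k as [|k IH]; simpl Cpow.
  - unfold cis. simpl. now rewrite Rmult_0_l, cos_0, sin_0.
  - rewrite IH, cis_add, S_INR. f_equal. ring.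
Qed.

Lemma Cconj_cis t : Cconj (cis t) = cis (- t).
Proof. unfold cis, Cconj; simpl. now rewrite cos_neg, sin_neg. Qed.

Lemma Cmod_cis t : Cmod (cis t) = 1.
Proof.
  unfold cis, Cmod; simpl. pose proof (sin2_cos2 t) as H. unfold Rsqr in H.
  replace (cos t * (cos t * 1) + sin t * (sin t * 1)) with 1 by lra. apply sqrt_1.
Qed.

Lemma cis_2PI_nat k : cis (2 * PI * INR k) = RtoC 1.
Proof.
  pose proof (cos_period 0 k) as Hc. pose proof (sin_period 0 k) as Hs.
  rewrite Rplus_0_l, cos_0 in Hc. rewrite Rplus_0_l, sin_0 in Hs.
  unfold cis. replace (2 * PI * INR k) with (2 * INR k * PI) by ring.
  now rewrite Hc, Hs.
Qed.

Lemma cis_neq_1 x : x <> 0 -> - (2 * PI) < x < 2 * PI -> cis x <> RtoC 1.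
Proof.
  intros Hx0 Hx Hc. apply (f_equal fst) in Hc. simpl in Hc.
  assert (Hs : sin (x / 2) = 0).
  { pose proof (cos_2a_sin (x / 2)) as H. replace (2 * (x / 2)) with x in H by field. nra. }
  destruct (sin_eq_0_0 _ Hs) as [m Hm].
  pose proof PI_RGT_0.
  assert (Hm1 : -1 < IZR m < 1) by (split; apply (Rmult_lt_reg_r PI); nra).
  destruct Hm1 as [H1 H2]. apply lt_IZR in H1. apply lt_IZR in H2.
  assert (m = 0%Z) by lia. subst m. simpl in Hm. lra.
Qed.

Lemma csum_pow_root_of_unity q M : (q ^ M)%C = RtoC 1 -> q <> RtoC 1 -> csum (Cpow q) M = RtoC 0.
Proof.
  intros HqM Hq1. assert (Hne : (q - 1)%C <> RtoC 0) by (now intros H; apply Hq1, Ceq_minus).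
  pose proof (csum_geom q M) as G. rewrite HqM in G.
  replace (csum (Cpow q) M) with (/ (q - 1) * ((q - 1) * csum (Cpow q) M))%C
    by (field; exact Hne).
  rewrite G. ring.
Qed.

Section RootsOfUnity.

Variable M : nat.
Hypothesis M_pos : (0 < M)%nat.

Let theta := 2 * PI / INR M.

Lemma csum_cis_pow_orthogonal k l : (k < M)%nat -> (l < M)%nat ->
  csum (Cpow (cis (theta * (INR k - INR l)))) M = if Nat.eqb k l then RtoC (INR M) else RtoC 0.
Proof.
  intros Hk Hl. pose proof (lt_0_INR M M_pos). pose proof PI_RGT_0.
  destruct (Nat.eqb_spec k l) as [<-|Hkl].
  - rewrite Rminus_diag, Rmult_0_r.
    replace (cis 0) with (RtoC 1) by (unfold cis; now rewrite cos_0, sin_0).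
    rewrite (csum_ext _ (fun _ => RtoC 1)), csum_RtoC, rsum_const, Rmult_1_r; [easy|].
    intros j _. clear. induction j as [|j IH]; simpl; [easy|]. rewrite IH. ring.
  - apply csum_pow_root_of_unity.
    + rewrite cis_pow. unfold theta.
      replace (INR M * (2 * PI / INR M * (INR k - INR l)))
        with (2 * PI * INR k + - (2 * PI * INR l)) by (field; lra).
      rewrite <- cis_add, <- Cconj_cis, !cis_2PI_nat.
      apply injective_projections; simpl; ring.
    + assert (INR k < INR M) by (apply lt_INR; lia).
      assert (INR l < INR M) by (apply lt_INR; lia).
      assert (INR k <> INR l) by (intros E; apply Hkl, INR_eq, E).
      pose proof (pos_INR k). pose proof (pos_INR l).
      unfold theta. replace (2 * PI / INR M * (INR k - INR l))
        with (2 * PI * ((INR k - INR l) / INR M)) by (field; lra).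
      assert (-1 < (INR k - INR l) / INR M < 1)
        by (split; apply (Rmult_lt_reg_r (INR M)); auto; unfold Rdiv;
            rewrite Rmult_assoc, Rinv_l; lra).
      assert ((INR k - INR l) / INR M <> 0)
        by (unfold Rdiv; apply Rmult_integral_contrapositive; split;
            [lra|apply Rinv_neq_0_compat; lra]).
      apply cis_neq_1; [|nra]. apply Rmult_integral_contrapositive. split; [lra|assumption].
Qed.

Lemma discrete_parseval (c : nat -> C) :
  rsum (fun j => Cmod (csum (fun k => c k * cis (INR k * (INR j * theta)))%C M) ^ 2) M
  = INR M * rsum (fun k => Cmod (c k) ^ 2) M.
Proof.
  apply RtoC_injective. rewrite RtoC_mult, <- !csum_RtoC.
  rewrite (csum_ext _ (fun j => csum (fun k => csum (fun l =>
      c k * Cconj (c l) * cis (theta * (INR k - INR l)) ^ j) M) M)%C).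
  2:{ intros j _. rewrite Cmod2_conj, Cconj_csum, csum_mul.
      apply csum_ext. intros k _. apply csum_ext. intros l _.
      rewrite Cmult_conj, Cconj_cis, cis_pow.
      transitivity (c k * Cconj (c l) * (cis (INR k * (INR j * theta)) *
                      cis (- (INR l * (INR j * theta)))))%C; [ring|].
      rewrite cis_add. do 2 f_equal. ring. }
  rewrite csum_exchange, <- csum_mull. apply csum_ext. intros k Hk.
  rewrite csum_exchange, <- (csum_delta (INR M * (Cmod (c k) ^ 2)%R)%C k M Hk).
  apply csum_ext. intros l Hl.
  rewrite csum_mull, csum_cis_pow_orthogonal, Cmod2_conj by auto.
  rewrite Nat.eqb_sym. destruct (Nat.eqb_spec l k) as [->|]; ring.
Qed.

End RootsOfUnity.

Lemma is_seriesC_csum (t : nat -> C) l : is_seriesC t l <->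
  forall eps, 0 < eps -> exists N, forall n, (N <= n)%nat -> Cmod (csum t n - l) < eps.
Proof.
  split.
  - intros H eps Heps.
    assert (Hev : eventually (fun m => ball_norm l (mkposreal eps Heps) (sum_n t m))).
    { apply H, locally_le_locally_norm, locally_norm_ball_norm. }
    destruct Hev as [N HN]. exists (S N). intros [|n] Hn; [lia|].
    rewrite <- sum_n_csum. apply (HN n). lia.
  - intros H P HP. apply locally_norm_le_locally in HP as [eps HP].
    destruct (H eps (cond_pos eps)) as [N HN]. exists N. intros n Hn.
    apply HP. unfold ball_norm. rewrite sum_n_csum. apply HN. lia.
Qed.

Lemma is_seriesC_unique (t : nat -> C) l1 l2 : is_seriesC t l1 -> is_seriesC t l2 -> l1 = l2.
Proof.
  apply (filterlim_locally_unique (FF := Proper_StrongProper _ eventually_filter)).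
Qed.

Lemma Cmod_sub_triangle a b c : Cmod (a - c) <= Cmod (a - b) + Cmod (b - c).
Proof. replace (a - c)%C with ((a - b) + (b - c))%C by ring. apply Cmod_triangle. Qed.

Lemma Cmod_sub_sym a b : Cmod (a - b) = Cmod (b - a).
Proof. replace (a - b)%C with (- (b - a))%C by ring. apply Cmod_opp. Qed.

Lemma is_seriesC_dist_le (t : nat -> C) l x e : is_seriesC t l ->
  (exists N, forall n, (N <= n)%nat -> Cmod (csum t n - x) <= e) -> Cmod (l - x) <= e.
Proof.
  intros H [N HN]. apply Rnot_lt_le. intros Hlt.
  destruct (proj1 (is_seriesC_csum t l) H (Cmod (l - x) - e)) as [N' HN']; [lra|].
  specialize (HN (N + N')%nat ltac:(lia)). specialize (HN' (N + N')%nat ltac:(lia)).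
  pose proof (Cmod_sub_triangle l (csum t (N + N')) x).
  rewrite (Cmod_sub_sym l (csum t (N + N'))) in H0. lra.
Qed.

Lemma is_seriesC_Cmod_le (t : nat -> C) l B : is_seriesC t l ->
  (forall n, Cmod (csum t n) <= B) -> Cmod l <= B.
Proof.
  intros H HB. replace l with (l - 0)%C by ring.
  apply (is_seriesC_dist_le t); auto. exists O. intros n _.
  replace (csum t n - 0)%C with (csum t n) by ring. auto.
Qed.

Lemma is_series_rsum_le (u : nat -> R) L : is_series u L -> (forall k, 0 <= u k) ->
  forall n, rsum u n <= L.
Proof.
  intros H Hu n. apply Rle_trans with (rsum u (S n)); [apply rsum_le_mono; auto|].
  rewrite <- sum_n_rsum. apply (is_lim_seq_incr_compare (sum_n u) L H).
  intros m. rewrite sum_Sn. pose proof (Hu (S m)). unfold plus; simpl. lra.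
Qed.

Lemma ex_series_of_rsum_bounded (u : nat -> R) B : (forall k, 0 <= u k) ->
  (forall n, rsum u n <= B) -> ex_series u.
Proof.
  intros Hu HB. destruct (ex_finite_lim_seq_incr (sum_n u) B) as [l Hl].
  - intros n. rewrite !sum_n_rsum. apply rsum_le_mono; auto.
  - intros n. rewrite sum_n_rsum. auto.
  - exists l. exact Hl.
Qed.

Lemma is_series_tail_small (u : nat -> R) L : is_series u L -> (forall k, 0 <= u k) ->
  forall eps, 0 < eps ->
  exists N, forall n p, (N <= n)%nat -> rsum (fun k => u (n + k)%nat) p <= eps.
Proof.
  intros H Hu eps Heps.
  destruct (proj2 (is_lim_seq_spec (sum_n u) L) H (mkposreal eps Heps)) as [N HN].
  exists (S N). intros [|n] p Hn; [lia|].
  specialize (HN n ltac:(lia)). rewrite sum_n_rsum in HN.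
  pose proof (is_series_rsum_le u L H Hu (S n + p)). rewrite rsum_split in H0.
  apply Rabs_def2 in HN. simpl in *. lra.
Qed.

Definition CSeries (t : nat -> C) : C := epsilon (inhabits (RtoC 0)) (is_seriesC t).

Lemma CSeries_correct (t : nat -> C) :
  ex_series (V := C_NormedModule) t -> is_seriesC t (CSeries t).
Proof. apply (epsilon_spec (inhabits (RtoC 0)) (is_seriesC t)). Qed.

(** * Power series on the unit disk *)

Lemma is_pseries_at0 (a : nat -> C) l : is_pseries a (RtoC 0) l -> l = a O.
Proof.
  intros H. apply (is_seriesC_unique (fun k => RtoC 0 ^ k * a k)%C _ _ H), is_seriesC_csum.
  intros eps Heps. exists 1%nat. intros [|n] Hn; [lia|].
  replace (csum (fun k => RtoC 0 ^ k * a k)%C (S n)) with (a O).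
  - replace (a O - a O)%C with (RtoC 0) by ring. rewrite Cmod_0. exact Heps.
  - clear. induction n as [|n IH]; simpl in *; [ring|]. rewrite <- IH. ring.
Qed.

Lemma ex_pseries_of_Cmod (b : nat -> C) z :
  ex_series (fun k => Cmod (b k) * Cmod z ^ k) -> exists l : C, is_pseries b z l.
Proof.
  intros H. apply (ex_series_le (K := C_AbsRing) (V := C_CompleteNormedModule)) with (2 := H).
  intros n. change norm with Cmod. rewrite Cmod_mult, <- Cmod_pow, Rmult_comm. apply Rle_refl.
Qed.

Lemma is_seriesC_terms_bounded (t : nat -> C) l : is_seriesC t l ->
  exists B, forall n, Cmod (t n) <= B.
Proof.
  intros H. destruct (proj1 (is_seriesC_csum t l) H 1 Rlt_0_1) as [N HN].
  exists (2 + rsum (fun k => Cmod (t k)) N). intros n.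
  pose proof (rsum_ge0 (fun k => Cmod (t k)) N (fun k => Cmod_ge_0 _)).
  destruct (Nat.lt_ge_cases n N) as [Hn|Hn].
  - pose proof (rsum_term_le (fun k => Cmod (t k)) n N (fun k => Cmod_ge_0 _) Hn). lra.
  - pose proof (HN n Hn). pose proof (HN (S n) ltac:(lia)). simpl csum in *.
    pose proof (Cmod_sub_triangle (csum t n + t n)%C l (csum t n)).
    rewrite (Cmod_sub_sym l) in H3.
    replace (csum t n + t n - csum t n)%C with (t n) in H3 by ring. lra.
Qed.

Lemma ex_series_sqr_mul_pow q : 0 <= q < 1 -> ex_series (fun k => INR k ^ 2 * q ^ k).
Proof.
  intros Hq.
  assert (Hr : CV_radius (fun _ : nat => 1) = 1).
  { replace (Finite 1) with (Finite (/ 1)) by (f_equal; field).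
    apply CV_radius_finite_DAlembert; [intros; lra|lra|].
    apply is_lim_seq_ext with (fun _ => 1); [|apply is_lim_seq_const].
    intros. now rewrite Rdiv_1_r, Rabs_R1. }
  assert (Hin : Rbar_lt (Rabs q) (CV_radius (PS_derive (PS_derive (fun _ : nat => 1))))).
  { rewrite !CV_radius_derive, Hr. simpl. rewrite Rabs_pos_eq; lra. }
  apply (ex_series_le (K := R_AbsRing) (V := R_CompleteNormedModule))
    with (2 := CV_disk_inside _ _ Hin).
  intros n. unfold PS_derive. change norm with Rabs.
  assert (0 <= q ^ n) by (apply pow_le; lra). pose proof (pos_INR n).
  rewrite Rabs_pos_eq by (apply Rmult_le_pos; [apply pow2_ge_0|lra]).
  rewrite Rabs_pos_eq by (rewrite !S_INR; apply Rmult_le_pos; [nra|lra]).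
  apply Rmult_le_compat_r; [lra|]. rewrite !S_INR. nra.
Qed.

Lemma pseries_rep_coef_growth (F : C -> C) (a : nat -> C) rho : pseries_rep F a ->
  0 <= rho < 1 -> ex_series (fun k => INR k ^ 2 * (Cmod (a k) * rho ^ k)).
Proof.
  intros HF Hrho.
  set (r := (1 + rho) / 2).
  assert (Hr : 0 < r < 1) by (unfold r; lra).
  assert (Hdisk : in_disk (RtoC r)) by (unfold in_disk; rewrite Cmod_R, Rabs_pos_eq; lra).
  destruct (is_seriesC_terms_bounded _ _ (HF _ Hdisk)) as [B HB].
  set (q := rho / r).
  assert (Hq : 0 <= q < 1).
  { unfold q. split; [apply Rdiv_le_0_compat; lra|].
    apply (Rmult_lt_reg_r r); [lra|]. unfold Rdiv. rewrite Rmult_assoc, Rinv_l; unfold r; lra. }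
  apply (ex_series_le (K := R_AbsRing) (V := R_CompleteNormedModule) _
           (fun k => B * (INR k ^ 2 * q ^ k))).
  - intros n. change norm with Rabs. specialize (HB n).
    change (Cmod (RtoC r ^ n * a n)%C <= B) in HB.
    rewrite Cmod_mult, Cmod_pow, Cmod_R, Rabs_pos_eq in HB by lra.
    assert (0 <= INR n ^ 2 * q ^ n) by (apply Rmult_le_pos; apply pow_le; [apply pos_INR|lra]).
    assert (0 <= Cmod (a n)) by apply Cmod_ge_0.
    assert (0 <= r ^ n) by (apply pow_le; lra).
    assert (0 <= q ^ n) by (apply pow_le; lra).
    replace rho with (r * q) by (unfold q; field; lra).
    rewrite Rpow_mult_distr, Rabs_pos_eq.
    2:{ apply Rmult_le_pos; [apply pow2_ge_0|]. apply Rmult_le_pos; [|apply Rmult_le_pos]; auto. }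
    replace (INR n ^ 2 * (Cmod (a n) * (r ^ n * q ^ n)))
      with ((r ^ n * Cmod (a n)) * (INR n ^ 2 * q ^ n)) by ring.
    apply Rmult_le_compat_r; auto.
  - apply (ex_series_scal_l (K := R_AbsRing) (V := R_NormedModule)), ex_series_sqr_mul_pow, Hq.
Qed.

Lemma pseries_rep_ex_series_shift (F : C -> C) (a : nat -> C) m r : (1 <= m)%nat ->
  pseries_rep F a -> 0 <= r < 1 -> ex_series (fun k => INR (S k) * (Cmod (a (m + k)%nat) * r ^ k)).
Proof.
  intros Hm HF Hr.
  set (rho := (1 + r) / 2).
  assert (Hrho : 0 < rho < 1) by (unfold rho; lra).
  assert (Hg : ex_series (fun k => INR (m + k) ^ 2 * (Cmod (a (m + k)%nat) * rho ^ (m + k))))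
    by (apply (proj1 (ex_series_incr_n (fun k => INR k ^ 2 * (Cmod (a k) * rho ^ k)) m)),
          (pseries_rep_coef_growth F a rho HF); lra).
  apply (ex_series_le (K := R_AbsRing) (V := R_CompleteNormedModule) _
           (fun k => / rho ^ m * (INR (m + k) ^ 2 * (Cmod (a (m + k)%nat) * rho ^ (m + k))))).
  - intros n. change norm with Rabs.
    assert (0 < rho ^ m) by (apply pow_lt; lra).
    assert (r ^ n <= rho ^ n) by (apply pow_incr; unfold rho; lra).
    assert (0 <= r ^ n) by (apply pow_le; lra).
    assert (INR (S n) <= INR (m + n) ^ 2).
    { assert (INR (S n) <= INR (m + n)) by (apply le_INR; lia).
      assert (1 <= INR (m + n)) by (apply (le_INR 1); lia). nra. }
    assert (0 <= Cmod (a (m + n)%nat)) by apply Cmod_ge_0. pose proof (pos_INR (S n)).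
    rewrite Rabs_pos_eq by (apply Rmult_le_pos; [|apply Rmult_le_pos]; lra).
    rewrite pow_add.
    replace (/ rho ^ m * (INR (m + n) ^ 2 * (Cmod (a (m + n)%nat) * (rho ^ m * rho ^ n))))
      with (INR (m + n) ^ 2 * (Cmod (a (m + n)%nat) * rho ^ n)) by (field; lra).
    apply Rmult_le_compat; try apply Rmult_le_compat_l; nra.
  - apply (ex_series_scal_l (K := R_AbsRing) (V := R_NormedModule)), Hg.
Qed.

Definition deriv_coef (a : nat -> C) (k : nat) : C := (INR (S k) * a (S k))%C.

(* If [a] are the Taylor coefficients of [f], then [defect_coef a] are those of
   [(z f'(z) - f(z)) / z^2]. *)
Definition defect_coef (a : nat -> C) (n : nat) : C := (INR (S n) * a (S (S n)))%C.

Lemma Cmod_INR_mul (n : nat) (x : C) : Cmod (INR n * x)%C = INR n * Cmod x.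
Proof. now rewrite Cmod_mult, Cmod_R, Rabs_pos_eq by apply pos_INR. Qed.

Lemma pseries_rep_ex_deriv (F : C -> C) (a : nat -> C) z : pseries_rep F a -> in_disk z ->
  exists D : C, is_pseries (deriv_coef a) z D.
Proof.
  intros HF Hz. apply ex_pseries_of_Cmod.
  apply (ex_series_ext (fun k => INR (S k) * (Cmod (a (1 + k)%nat) * Cmod z ^ k))).
  - intros k. unfold deriv_coef. rewrite Cmod_INR_mul. simpl. ring.
  - apply (pseries_rep_ex_series_shift F); auto. split; [apply Cmod_ge_0|exact Hz].
Qed.

Lemma pseries_rep_ex_series_defect (F : C -> C) (a : nat -> C) r : pseries_rep F a ->
  0 <= r < 1 -> ex_series (fun k => Cmod (defect_coef a k) * r ^ k).
Proof.
  intros HF Hr.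
  apply (ex_series_ext (fun k => INR (S k) * (Cmod (a (2 + k)%nat) * r ^ k))).
  - intros k. unfold defect_coef. rewrite Cmod_INR_mul. simpl. ring.
  - apply (pseries_rep_ex_series_shift F); auto.
Qed.

Lemma pseries_rep_ex_defect (F : C -> C) (a : nat -> C) z : pseries_rep F a -> in_disk z ->
  exists G : C, is_pseries (defect_coef a) z G.
Proof.
  intros HF Hz. apply ex_pseries_of_Cmod, (pseries_rep_ex_series_defect F); auto.
  split; [apply Cmod_ge_0|exact Hz].
Qed.

Definition Cpow_deriv (z : C) (k : nat) : C :=
  match k with O => RtoC 0 | S j => (INR (S j) * z ^ j)%C end.

Definition pow_taylor_rem (w z : C) (k : nat) : C := (w ^ k - z ^ k - (w - z) * Cpow_deriv z k)%C.

Lemma pow_taylor_rem_S w z k : pow_taylor_rem w z (S k) =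
  (w * pow_taylor_rem w z k + (w - z) * (w - z) * Cpow_deriv z k)%C.
Proof.
  unfold pow_taylor_rem. destruct k as [|j]; cbn -[INR].
  - replace (RtoC (INR 1)) with (RtoC 1) by (simpl; auto). ring.
  - rewrite (S_INR (S j)), RtoC_plus. ring.
Qed.

Lemma Cmod_Cpow_deriv_le z k rho : 0 < rho -> Cmod z <= rho ->
  rho * Cmod (Cpow_deriv z k) <= INR k * rho ^ k.
Proof.
  intros Hr Hz. destruct k as [|j]; cbn -[INR pow Cpow].
  - rewrite Cmod_0. simpl. lra.
  - rewrite Cmod_INR_mul, Cmod_pow. simpl pow.
    assert (Cmod z ^ j <= rho ^ j) by (apply pow_incr; split; [apply Cmod_ge_0|auto]).
    pose proof (pos_INR (S j)).
    assert (0 <= rho * INR (S j)) by nra. nra.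
Qed.

Lemma Cmod_pow_taylor_rem_le w z k rho : 0 < rho -> Cmod z <= rho -> Cmod w <= rho ->
  rho ^ 2 * Cmod (pow_taylor_rem w z k) <= INR k ^ 2 * rho ^ k * Cmod (w - z) ^ 2.
Proof.
  intros Hr Hz Hw. induction k as [|k IH].
  - unfold pow_taylor_rem. simpl.
    replace (1 - 1 - (w - z) * 0)%C with (RtoC 0) by ring. rewrite Cmod_0. lra.
  - rewrite pow_taylor_rem_S.
    set (d := Cmod (w - z)) in *.
    set (E := Cmod (pow_taylor_rem w z k)) in *.
    set (P := Cmod (Cpow_deriv z k)).
    assert (Htri : Cmod (w * pow_taylor_rem w z k + (w - z) * (w - z) * Cpow_deriv z k)%C
                   <= Cmod w * E + d ^ 2 * P).
    { eapply Rle_trans; [apply Cmod_triangle|]. rewrite !Cmod_mult. unfold d, E, P. lra. }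
    assert (HE : 0 <= rho ^ 2 * E) by (apply Rmult_le_pos; [apply pow2_ge_0|apply Cmod_ge_0]).
    assert (H1 : Cmod w * (rho ^ 2 * E) <= rho * (INR k ^ 2 * rho ^ k * d ^ 2))
      by (apply Rmult_le_compat; auto using Cmod_ge_0).
    assert (H2 : rho * d ^ 2 * (rho * P) <= rho * d ^ 2 * (INR k * rho ^ k))
      by (apply Rmult_le_compat_l; [apply Rmult_le_pos; [lra|apply pow2_ge_0]|
                                    apply Cmod_Cpow_deriv_le; auto]).
    assert (H3 : 0 <= rho * (INR k * rho ^ k * d ^ 2)).
    { apply Rmult_le_pos; [lra|]. apply Rmult_le_pos; [|apply pow2_ge_0].
      apply Rmult_le_pos; [apply pos_INR|apply pow_le; lra]. }
    assert (H4 : 0 <= rho * rho ^ k * d ^ 2).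
    { apply Rmult_le_pos; [|apply pow2_ge_0]. apply Rmult_le_pos; [lra|apply pow_le; lra]. }
    apply Rle_trans with (rho ^ 2 * (Cmod w * E + d ^ 2 * P));
      [apply Rmult_le_compat_l; [apply pow2_ge_0|exact Htri]|].
    rewrite S_INR. simpl pow in *. nra.
Qed.

Lemma is_derive_of_quadratic_rem (f : C -> C) z l K del : 0 < del ->
  (forall w, Cmod (w - z) < del -> Cmod (f w - f z - (w - z) * l) <= K * Cmod (w - z) ^ 2) ->
  is_derive f z l.
Proof.
  intros Hdel Hrem. split; [apply is_linear_scal_l|].
  intros x Hx.
  pose proof (is_filter_lim_locally_unique
                (K := C_AbsRing) (V := AbsRing_NormedModule C_AbsRing) z x Hx).
  subst x. intros eps.
  apply (locally_le_locally_norm (K := C_AbsRing) (V := AbsRing_NormedModule C_AbsRing)).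
  set (r := Rmin del (eps / (Rabs K + 1))).
  assert (Hr : 0 < r).
  { apply Rmin_pos; [exact Hdel|]. apply Rdiv_lt_0_compat; [apply cond_pos|].
    pose proof (Rabs_pos K). lra. }
  exists (mkposreal r Hr). intros w Hw. change (Cmod (w - z) < r) in Hw.
  change (Cmod (f w - f z - (w - z) * l) <= eps * Cmod (w - z)).
  pose proof (Cmod_ge_0 (w - z)). pose proof (Rabs_pos K). pose proof (Rle_abs K).
  pose proof (Rmin_l del (eps / (Rabs K + 1))) as Hr1.
  pose proof (Rmin_r del (eps / (Rabs K + 1))) as Hr2.
  fold r in Hr1, Hr2.
  assert (HdK : Cmod (w - z) * (Rabs K + 1) <= eps).
  { apply Rle_trans with (eps / (Rabs K + 1) * (Rabs K + 1)); [apply Rmult_le_compat_r; lra|].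
    right. field. lra. }
  eapply Rle_trans; [apply Hrem; lra|]. simpl pow. nra.
Qed.

Lemma is_series_taylor_rem (F : C -> C) (a : nat -> C) (z w D : C) : pseries_rep F a ->
  in_disk z -> in_disk w -> is_pseries (deriv_coef a) z D ->
  is_seriesC (fun k => a k * pow_taylor_rem w z k)%C (F w - F z - (w - z) * D)%C.
Proof.
  intros HF Hz Hw HD.
  assert (HD' : is_seriesC (fun k => a k * Cpow_deriv z k)%C D).
  { apply (is_series_decr_1 (V := C_NormedModule)).
    match goal with |- is_series _ ?l => replace l with D end.
    2:{ change (D = D + - (a O * Cpow_deriv z O))%C. change (Cpow_deriv z O) with (RtoC 0). ring. }
    apply (is_series_ext (V := C_NormedModule)) with (2 := HD).
    intros k. change ((z ^ k * deriv_coef a k)%C = (a (S k) * Cpow_deriv z (S k))%C).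
    unfold deriv_coef. change (Cpow_deriv z (S k)) with (INR (S k) * z ^ k)%C. ring. }
  pose proof (is_series_minus _ _ _ _ (is_series_minus _ _ _ _ (HF w Hw) (HF z Hz))
                (is_series_scal (w - z)%C _ _ HD')) as H.
  apply (is_series_ext (V := C_NormedModule)) with (2 := H).
  intros k. unfold pow_taylor_rem.
  change ((w ^ k * a k + - (z ^ k * a k)) + - ((w - z) * (a k * Cpow_deriv z k))
          = a k * (w ^ k - z ^ k - (w - z) * Cpow_deriv z k))%C.
  ring.
Qed.

Lemma pseries_taylor_rem_le (F : C -> C) (a : nat -> C) (z w D : C) rho : pseries_rep F a ->
  0 < rho < 1 -> Cmod z <= rho -> Cmod w <= rho -> is_pseries (deriv_coef a) z D ->
  Cmod (F w - F z - (w - z) * D)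
  <= Series (fun k => INR k ^ 2 * (Cmod (a k) * rho ^ k)) / rho ^ 2 * Cmod (w - z) ^ 2.
Proof.
  intros HF Hrho Hz Hw HD.
  set (g := fun k => INR k ^ 2 * (Cmod (a k) * rho ^ k)).
  assert (Hg : ex_series g) by (apply (pseries_rep_coef_growth F); [exact HF|lra]).
  assert (Hg0 : forall k, 0 <= g k).
  { intros k. apply Rmult_le_pos; [apply pow2_ge_0|].
    apply Rmult_le_pos; [apply Cmod_ge_0|apply pow_le; lra]. }
  assert (Hrem := is_series_taylor_rem F a z w D HF ltac:(unfold in_disk; lra)
                    ltac:(unfold in_disk; lra) HD).
  assert (Hrho2 : 0 < rho ^ 2) by (apply pow_lt; lra).
  apply (is_seriesC_Cmod_le _ _ _ Hrem). intros n.
  eapply Rle_trans; [apply Cmod_csum_le|].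
  apply Rle_trans with (rsum (fun k => Cmod (w - z) ^ 2 / rho ^ 2 * g k) n).
  - apply rsum_le. intros k _. rewrite Cmod_mult.
    pose proof (Cmod_pow_taylor_rem_le w z k rho ltac:(lra) Hz Hw) as HE.
    apply (Rmult_le_reg_l (rho ^ 2)); [exact Hrho2|].
    unfold g.
    replace (rho ^ 2 * (Cmod (w - z) ^ 2 / rho ^ 2 * (INR k ^ 2 * (Cmod (a k) * rho ^ k))))
      with (Cmod (a k) * (INR k ^ 2 * rho ^ k * Cmod (w - z) ^ 2)) by (field; lra).
    replace (rho ^ 2 * (Cmod (a k) * Cmod (pow_taylor_rem w z k)))
      with (Cmod (a k) * (rho ^ 2 * Cmod (pow_taylor_rem w z k))) by ring.
    apply Rmult_le_compat_l; [apply Cmod_ge_0|exact HE].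
  - rewrite rsum_mull.
    replace (Series g / rho ^ 2 * Cmod (w - z) ^ 2) with (Cmod (w - z) ^ 2 / rho ^ 2 * Series g)
      by (field; lra).
    apply Rmult_le_compat_l; [apply Rdiv_le_0_compat; [apply pow2_ge_0|exact Hrho2]|].
    apply is_series_rsum_le; [apply Series_correct, Hg|exact Hg0].
Qed.

Lemma is_derive_pseries (F : C -> C) (a : nat -> C) (z D : C) : pseries_rep F a -> in_disk z ->
  is_pseries (deriv_coef a) z D -> is_derive F z D.
Proof.
  unfold in_disk. intros HF Hz HD. pose proof (Cmod_ge_0 z).
  set (rho := (1 + Cmod z) / 2).
  apply (is_derive_of_quadratic_rem F z D
           (Series (fun k => INR k ^ 2 * (Cmod (a k) * rho ^ k)) / rho ^ 2) ((1 - Cmod z) / 2));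
    [lra|].
  intros w Hw. apply (pseries_taylor_rem_le F a); auto; unfold rho; [lra|lra|].
  replace w with (z + (w - z))%C by ring.
  eapply Rle_trans; [apply Cmod_triangle|]. lra.
Qed.

Lemma pseries_rep_derive (F : C -> C) (a : nat -> C) z : pseries_rep F a -> in_disk z ->
  exists D : C, is_pseries (deriv_coef a) z D /\ is_derive F z D.
Proof.
  intros HF Hz. destruct (pseries_rep_ex_deriv F a z HF Hz) as [D HD].
  exists D. split; [exact HD|]. exact (is_derive_pseries F a z D HF Hz HD).
Qed.

Lemma in_disk_0 : in_disk (RtoC 0).
Proof. unfold in_disk. rewrite Cmod_0. lra. Qed.

Lemma pseries_rep_coef0 (F : C -> C) (a : nat -> C) : pseries_rep F a -> F (RtoC 0) = a O.
Proof. intros HF. exact (is_pseries_at0 a _ (HF _ in_disk_0)). Qed.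

Lemma pseries_rep_coef1 (F : C -> C) (a : nat -> C) (d : C) : pseries_rep F a ->
  is_derive F (RtoC 0) d -> d = a 1%nat.
Proof.
  intros HF Hd. destruct (pseries_rep_derive F a _ HF in_disk_0) as [D [HD HFD]].
  rewrite <- (is_C_derive_unique _ _ _ Hd), (is_C_derive_unique _ _ _ HFD).
  rewrite (is_pseries_at0 _ _ HD). unfold deriv_coef. simpl. ring.
Qed.

Lemma pseries_defect_identity (a : nat -> C) (z F D G : C) : a O = RtoC 0 ->
  is_pseries a z F -> is_pseries (deriv_coef a) z D -> is_pseries (defect_coef a) z G ->
  (z * D - F)%C = (z * z * G)%C.
Proof.
  intros Ha0 HF HD HG.
  assert (HF1 : is_seriesC (fun k => z ^ S k * a (S k))%C F).
  { apply (is_series_incr_1 (V := C_NormedModule) (fun k => z ^ k * a k)%C).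
    match goal with |- is_series _ ?l => replace l with F
      by (change (F = F + z ^ 0 * a O)%C; rewrite Ha0; ring) end.
    exact HF. }
  assert (Hk : is_seriesC (fun k => z ^ S k * (INR k * a (S k)))%C (z * D - F)%C).
  { pose proof (is_series_minus _ _ _ _ (is_series_scal z _ _ HD) HF1) as H.
    apply (is_series_ext (V := C_NormedModule)) with (2 := H).
    intros k. unfold deriv_coef.
    change (z * (z ^ k * (INR (S k) * a (S k))) + - (z ^ S k * a (S k))
            = z ^ S k * (INR k * a (S k)))%C.
    rewrite S_INR, RtoC_plus. simpl Cpow. ring. }
  assert (Hk2 : is_seriesC (fun n => z ^ S (S n) * (INR (S n) * a (S (S n))))%C (z * D - F)%C).
  { apply (is_series_incr_1 (V := C_NormedModule) (fun k => z ^ S k * (INR k * a (S k)))%C).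
    match goal with |- is_series _ ?l => replace l with (z * D - F)%C
      by (change ((z * D - F) = (z * D - F) + z ^ 1 * (INR 0 * a 1%nat))%C; simpl INR; ring) end.
    exact Hk. }
  apply (is_seriesC_unique _ _ _ Hk2).
  apply (is_series_ext (V := C_NormedModule)) with (2 := is_series_scal (z * z)%C _ _ HG).
  intros n. unfold defect_coef.
  change ((z * z) * (z ^ n * (INR (S n) * a (S (S n))))
          = z ^ S (S n) * (INR (S n) * a (S (S n))))%C.
  simpl Cpow. ring.
Qed.

Lemma is_pseries_Cmod_le (e : nat -> C) (z l : C) B : is_pseries e z l ->
  (forall N, rsum (fun n => Cmod (e n) * Cmod z ^ n) N <= B) -> Cmod l <= B.
Proof.
  intros Hl HB. apply (is_seriesC_Cmod_le (fun n => z ^ n * e n)%C _ _ Hl). intros N.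
  eapply Rle_trans; [apply Cmod_csum_le|]. eapply Rle_trans; [|apply (HB N)].
  apply rsum_le. intros k _. rewrite Cmod_mult, Cmod_pow. lra.
Qed.

(** * Parseval's inequality *)

Lemma le_sqr_of_le_sqr_add_eps (S B : R) : 0 <= B ->
  (forall eps, 0 < eps <= 1 -> S <= (B + eps) ^ 2) -> S <= B ^ 2.
Proof.
  intros HB H. apply Rnot_lt_le. intros Hlt.
  set (e := Rmin 1 ((S - B ^ 2) / (2 * B + 2))).
  assert (He : 0 < e <= 1).
  { split; [apply Rmin_pos; [lra|apply Rdiv_lt_0_compat; lra]|apply Rmin_l]. }
  assert (He2 : e * (2 * B + 2) <= S - B ^ 2).
  { apply Rle_trans with ((S - B ^ 2) / (2 * B + 2) * (2 * B + 2)).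
    - apply Rmult_le_compat_r; [lra|apply Rmin_r].
    - right. field. lra. }
  specialize (H e He). nra.
Qed.

Lemma pseries_trunc_Cmod_le (b : nat -> C) (u G : C) B eps M :
  is_pseries b u G -> Cmod G <= B ->
  (forall p, rsum (fun k => Cmod (b (M + k)%nat) * Cmod u ^ (M + k)) p <= eps) ->
  Cmod (csum (fun k => u ^ k * b k)%C M) <= B + eps.
Proof.
  intros HG HB Htail.
  assert (Hdist : Cmod (G - csum (fun k => u ^ k * b k)%C M) <= eps).
  { apply (is_seriesC_dist_le (fun k => u ^ k * b k)%C _ _ _ HG). exists M. intros n Hn.
    replace n with (M + (n - M))%nat by lia.
    rewrite csum_split.
    replace (csum (fun k => u ^ k * b k)%C M + csum (fun k => u ^ (M + k) * b (M + k)%nat)%C (n - M)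
             - csum (fun k => u ^ k * b k)%C M)%C
      with (csum (fun k => u ^ (M + k) * b (M + k)%nat)%C (n - M)) by ring.
    eapply Rle_trans; [apply Cmod_csum_le|].
    eapply Rle_trans; [|apply (Htail (n - M)%nat)].
    apply rsum_le. intros k _. rewrite Cmod_mult, Cmod_pow. lra. }
  replace (csum (fun k => u ^ k * b k)%C M) with (G + - (G - csum (fun k => u ^ k * b k)%C M))%C
    by ring.
  eapply Rle_trans; [apply Cmod_triangle|]. rewrite Cmod_opp. lra.
Qed.

(* Obtained without integration: sample the truncated series at [M] equally spaced points
   of the circle and apply [discrete_parseval]. *)
Lemma parseval_bound (b : nat -> C) (G : C -> C) (r B : R) :
  0 <= r -> ex_series (fun k => Cmod (b k) * r ^ k) ->
  (forall u, Cmod u = r -> is_pseries b u (G u)) ->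
  (forall u, Cmod u = r -> Cmod (G u) <= B) ->
  forall N, rsum (fun k => Cmod (b k) ^ 2 * r ^ (2 * k)) N <= B ^ 2.
Proof.
  intros Hr Hex HG HB N.
  assert (Hur : Cmod (RtoC r) = r) by (rewrite Cmod_R, Rabs_pos_eq; auto).
  assert (HB0 : 0 <= B) by (eapply Rle_trans; [apply Cmod_ge_0|apply (HB _ Hur)]).
  set (h := fun k => Cmod (b k) * r ^ k).
  assert (Hh : forall k, 0 <= h k)
    by (intros; unfold h; apply Rmult_le_pos; [apply Cmod_ge_0|apply pow_le; auto]).
  apply le_sqr_of_le_sqr_add_eps; [exact HB0|]. intros eps Heps.
  destruct (is_series_tail_small h _ (Series_correct _ Hex) Hh eps ltac:(lra)) as [N0 HN0].
  set (M := (N + N0 + 1)%nat).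
  assert (HM : (0 < M)%nat) by (unfold M; lia).
  set (theta := 2 * PI / INR M).
  set (u := fun j => (r * cis (INR j * theta))%C).
  assert (Hu : forall j, Cmod (u j) = r)
    by (intros j; unfold u; rewrite Cmod_mult, Cmod_cis, Hur; ring).
  set (c := fun k => (b k * r ^ k)%C).
  assert (Hsample : forall j,
            Cmod (csum (fun k => c k * cis (INR k * (INR j * theta)))%C M) <= B + eps).
  { intros j.
    rewrite (csum_ext _ (fun k => u j ^ k * b k)%C).
    - apply (pseries_trunc_Cmod_le b (u j) (G (u j))); auto.
      intros p. rewrite Hu. apply (HN0 M p). unfold M. lia.
    - intros k _. unfold c, u. rewrite Cpow_mult_l, cis_pow, <- RtoC_pow.
      ring. }
  assert (HMr : 0 < INR M) by (apply lt_0_INR; exact HM).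
  assert (Hparseval : INR M * rsum (fun k => Cmod (c k) ^ 2) M <= INR M * (B + eps) ^ 2).
  { rewrite <- (discrete_parseval M HM c), <- rsum_const. fold theta. apply rsum_le. intros j _.
    specialize (Hsample j).
    pose proof (Cmod_ge_0 (csum (fun k => c k * cis (INR k * (INR j * theta)))%C M)).
    simpl pow. nra. }
  apply Rmult_le_reg_l in Hparseval; [|exact HMr].
  eapply Rle_trans; [|exact Hparseval].
  eapply Rle_trans.
  - apply (rsum_le_mono _ N M); [|unfold M; lia].
    intros k. apply Rmult_le_pos; [apply pow2_ge_0|apply pow_le; auto].
  - right. apply rsum_ext. intros k _. cbv beta. unfold c.
    rewrite Cmod_mult, Cmod_pow, Cmod_R, Rabs_pos_eq, Rpow_mult_distr, <- pow_mult, Nat.mul_comm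
      by exact Hr.
    reflexivity.
Qed.

(** * The class Omega_lambda *)

Lemma Omega_defect_parseval (lam : R) (f : C -> C) (a : nat -> C) r N :
  0 <= lam -> Omega lam f -> pseries_rep f a -> 0 < r < 1 ->
  rsum (fun n => Cmod (defect_coef a n) ^ 2 * r ^ (2 * n)) N <= lam ^ 2.
Proof.
  intros Hlam [_ [Hf0 [_ [phi [_ [Hphi Hd]]]]]] Hf Hr.
  assert (Ha0 : a O = RtoC 0) by (rewrite <- (pseries_rep_coef0 f a Hf); exact Hf0).
  apply (parseval_bound _ (fun u => RtoC lam * phi u)%C); [lra| |intros u Hu..].
  - apply (pseries_rep_ex_series_defect f); [exact Hf|lra].
  - assert (Hdisk : in_disk u) by (unfold in_disk; lra).
    assert (Hu0 : u <> RtoC 0) by (intros ->; rewrite Cmod_0 in Hu; lra).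
    destruct (pseries_rep_derive f a u Hf Hdisk) as [D [HD HfD]].
    destruct (pseries_rep_ex_defect f a u Hf Hdisk) as [G HG].
    destruct (Hd u Hdisk) as [d [Hfd Heq]].
    assert (d = D) as ->
      by (rewrite <- (is_C_derive_unique _ _ _ Hfd); exact (is_C_derive_unique _ _ _ HfD)).
    rewrite (pseries_defect_identity a u (f u) D G Ha0 (Hf u Hdisk) HD HG) in Heq.
    replace (RtoC lam * phi u)%C with G; [exact HG|].
    transitivity (/ (u * u) * (u * u * G))%C; [field; exact Hu0|].
    rewrite Heq. field. exact Hu0.
  - rewrite Cmod_mult, Cmod_R. pose proof (Hphi u ltac:(unfold in_disk; lra)).
    rewrite Rabs_pos_eq by exact Hlam. pose proof (Cmod_ge_0 (phi u)). nra.
Qed.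

Lemma Omega_of_defect_bound (lam : R) (h : C -> C) (p : nat -> C) :
  0 < lam -> pseries_rep h p -> p O = RtoC 0 -> p 1%nat = RtoC 1 ->
  (forall z, in_disk z -> forall N, rsum (fun n => Cmod (defect_coef p n) * Cmod z ^ n) N <= lam) ->
  Omega lam h.
Proof.
  intros Hlam Hh Hp0 Hp1 Hbound.
  set (e := fun n => (RtoC (/ lam) * defect_coef p n)%C).
  assert (He : forall z, in_disk z -> forall N, rsum (fun n => Cmod (e n) * Cmod z ^ n) N <= 1).
  { intros z Hz N. rewrite (rsum_ext _ (fun n => / lam * (Cmod (defect_coef p n) * Cmod z ^ n))).
    - rewrite rsum_mull. specialize (Hbound z Hz N).
      apply (Rmult_le_reg_l lam); [exact Hlam|]. rewrite <- Rmult_assoc, Rinv_r; lra.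
    - intros n _. unfold e. rewrite Cmod_mult, Cmod_R, Rabs_pos_eq; [ring|].
      apply Rlt_le, Rinv_0_lt_compat, Hlam. }
  set (psi := fun z => CSeries (fun n => z ^ n * e n)%C).
  assert (Hpsi : forall z, in_disk z -> is_pseries e z (psi z)).
  { intros z Hz. apply CSeries_correct, (ex_pseries_of_Cmod e z).
    apply (ex_series_of_rsum_bounded _ 1); [|exact (He z Hz)].
    intros n. apply Rmult_le_pos; [apply Cmod_ge_0|apply pow_le, Cmod_ge_0]. }
  split; [exists p; exact Hh|split; [|split]].
  - rewrite (pseries_rep_coef0 h p Hh). exact Hp0.
  - destruct (pseries_rep_derive h p _ Hh in_disk_0) as [D [_ HD]].
    rewrite <- Hp1, <- (pseries_rep_coef1 h p D Hh HD). exact HD.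
  - exists psi. split; [exists e; exact Hpsi|split].
    + intros z Hz. exact (is_pseries_Cmod_le e z _ 1 (Hpsi z Hz) (He z Hz)).
    + intros z Hz. destruct (pseries_rep_derive h p z Hh Hz) as [D [HD HhD]].
      exists D. split; [exact HhD|].
      rewrite (pseries_defect_identity p z (h z) D (lam * psi z)%C Hp0 (Hh z Hz) HD); [ring|].
      apply (is_series_ext (V := C_NormedModule))
        with (2 := is_series_scal (RtoC lam) _ _ (Hpsi z Hz)).
      intros n. unfold e.
      change (RtoC lam * (z ^ n * (RtoC (/ lam) * defect_coef p n)) = z ^ n * defect_coef p n)%C.
      rewrite RtoC_inv by lra. field. intros H0. apply RtoC_injective in H0. lra.
Qed.

Lemma Cmod_defect_coef_hadamard_le (a b : nat -> C) n :
  Cmod (defect_coef (fun k => a k * b k)%C n) <= Cmod (defect_coef a n) * Cmod (defect_coef b n).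
Proof.
  unfold defect_coef. rewrite !Cmod_INR_mul, Cmod_mult.
  pose proof (Cmod_ge_0 (a (S (S n)))). pose proof (Cmod_ge_0 (b (S (S n)))).
  assert (1 <= INR (S n)) by (rewrite S_INR; pose proof (pos_INR n); lra).
  assert (0 <= (INR (S n) - 1) * (INR (S n) * (Cmod (a (S (S n))) * Cmod (b (S (S n))))))
    by (apply Rmult_le_pos; [lra|apply Rmult_le_pos; [lra|apply Rmult_le_pos; auto]]).
  nra.
Qed.

Lemma rsum_mul_le_of_sqr (x y w : nat -> R) c N : (forall k, 0 <= w k) ->
  rsum (fun k => x k ^ 2 * w k) N <= c -> rsum (fun k => y k ^ 2 * w k) N <= c ->
  rsum (fun k => x k * y k * w k) N <= c.
Proof.
  intros Hw Hx Hy.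
  apply Rle_trans with (rsum (fun k => / 2 * (x k ^ 2 * w k + y k ^ 2 * w k)) N).
  - apply rsum_le. intros k _. pose proof (Hw k). pose proof (pow2_ge_0 (x k - y k)). nra.
  - rewrite rsum_mull, rsum_add. lra.
Qed.

Theorem theorem4p5 (lam : R) (f1 f2 h : C -> C) (a1 a2 : nat -> C) :
  0 < lam -> lam <= 1 ->
  Omega lam f1 -> Omega lam f2 ->
  pseries_rep f1 a1 -> pseries_rep f2 a2 ->
  hadamard_rep h a1 a2 ->
  Omega lam h.
Proof.
  intros Hlam Hlam1 HO1 HO2 Hr1 Hr2 Hh.
  pose proof HO1 as [_ [Hf10 [Hf11 _]]]. pose proof HO2 as [_ [_ [Hf21 _]]].
  apply (Omega_of_defect_bound lam h _ Hlam Hh).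
  - rewrite <- (pseries_rep_coef0 f1 a1 Hr1), Hf10. ring.
  - rewrite <- (pseries_rep_coef1 f1 a1 _ Hr1 Hf11), <- (pseries_rep_coef1 f2 a2 _ Hr2 Hf21). ring.
  - intros z Hz N. unfold in_disk in Hz. pose proof (Cmod_ge_0 z).
    set (r := sqrt ((1 + Cmod z) / 2)).
    assert (Hr2z : r ^ 2 = (1 + Cmod z) / 2) by (unfold r; rewrite pow2_sqrt; lra).
    assert (Hr0 : 0 < r) by (apply sqrt_lt_R0; lra).
    assert (Hr : 0 < r < 1) by nra.
    apply Rle_trans with
      (rsum (fun n => Cmod (defect_coef a1 n) * Cmod (defect_coef a2 n) * r ^ (2 * n)) N).
    + apply rsum_le. intros n _. rewrite pow_mult, Hr2z.
      apply Rmult_le_compat; [apply Cmod_ge_0|apply pow_le, Cmod_ge_0|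
        apply Cmod_defect_coef_hadamard_le|apply pow_incr; lra].
    + apply Rle_trans with (lam ^ 2); [|nra].
      apply rsum_mul_le_of_sqr; [intros; apply pow_le; lra|
        apply (Omega_defect_parseval lam f1)|apply (Omega_defect_parseval lam f2)]; auto; lra.
Qed.
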